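(* Fix $\bar\alpha\in(0,1)$. For every $k\ge1$ and every $\alpha_1,\dots,\alpha_k\in[0,1]$ with $\max_\ell\alpha_\ell=\bar\alpha$, the accountability weights $w_j=(\prod_{\ell=1}^{j}\alpha_\ell)(1-\alpha_{j+1})$ for $j<k$ and $w_k=\prod_{\ell=1}^k\alpha_\ell$ satisfy $\max_j w_j\le 1-(1-\bar\alpha)^k<1$, and the bound $1-(1-\bar\alpha)^k$ converges to $1$ from below as $k\to\infty$.
   Context: The $\alpha_\ell$ are delegation degrees along a delegation chain of length $k$, and $w_j$ is the accountability weight of the $j$-th agent. *)

From HB Require Import structures.
From mathcomp Require Import all_boot all_order all_algebra.
From mathcomp Require Import all_classical all_reals all_analysis.
Set Implicit Arguments. Unset Strict Implicit. Unset Printing Implicit Defensive.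
Import Order.TTheory GRing.Theory Num.Theory.
Local Open Scope ring_scope.

(* Delegation degrees alpha_1, ..., alpha_k are encoded as alpha : nat -> R,
   only the values at indices 1..k matter. *)
Definition acc_weight {R : pzRingType} (alpha : nat -> R) (k j : nat) : R :=
  if (j < k)%N then (\prod_(1 <= l < j.+1) alpha l) * (1 - alpha j.+1)
  else \prod_(1 <= l < k.+1) alpha l.

From HB Require Import structures.
From mathcomp Require Import all_boot all_order all_algebra.
From mathcomp Require Import all_classical all_reals all_analysis.
Import numFieldNormedType.Exports.
Import Order.TTheory GRing.Theory Num.Theory.
Local Open Scope classical_set_scope.
Local Open Scope ring_scope.

(* Every accountability weight is the first delegation degree alpha_1 times
   factors in [0, 1], so it is at most alpha_1 <= abar.  Since 1 - abar lies
   in [0, 1], (1 - abar)^k <= 1 - abar, i.e. abar <= 1 - (1 - abar)^k. *)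

Section UnitIntervalWeights.
Context {R : numDomainType}.

Lemma prod_nat_le_head m n (a : nat -> R) :
  (m < n)%N -> (forall l, (m <= l < n)%N -> 0 <= a l <= 1) ->
  0 <= \prod_(m <= l < n) a l <= a m.
Proof.
move=> lt_mn a01; rewrite big_ltn // big_seq.
have /andP[am_ge0 _] : 0 <= a m <= 1 by rewrite a01 // leqnn lt_mn.
have tail01 l : l \in index_iota m.+1 n -> 0 <= a l <= 1.
  by rewrite mem_index_iota => /andP[/ltnW le_ml lt_ln]; apply: a01; rewrite le_ml.
by rewrite mulr_ge0 ?prodr_ge0 ?ler_piMr ?prodr_ile1 // => l /tail01/andP[].
Qed.

Lemma acc_weight_le_head (alpha : nat -> R) [k j] :
  (1 <= j <= k)%N -> (forall l, (1 <= l <= k)%N -> 0 <= alpha l <= 1) ->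
  acc_weight alpha k j <= alpha 1%N.
Proof.
move=> /andP[j_ge1 le_jk] alpha01; rewrite /acc_weight.
have prefix01 n l : (n <= k)%N -> (1 <= l < n.+1)%N -> 0 <= alpha l <= 1.
  move=> le_nk /andP[l_ge1]; rewrite ltnS => le_ln.
  by rewrite alpha01 // l_ge1 (leq_trans le_ln).
case: ifP => lt_jk.
- have /andP[prod_ge0 prod_le] := prod_nat_le_head 1 j.+1 alpha j_ge1 (prefix01 j ^~ le_jk).
  have /andP[alpha_ge0 _] : 0 <= alpha j.+1 <= 1 by rewrite alpha01.
  by apply: le_trans prod_le; rewrite ler_piMr // gerBl.
- have k_ge1 := leq_trans j_ge1 le_jk.
  by have /andP[] := prod_nat_le_head 1 k.+1 alpha k_ge1 (prefix01 k ^~ (leqnn k)).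
Qed.

Lemma le_one_sub_expr (a : R) k :
  (0 < k)%N -> 0 <= a <= 1 -> a <= 1 - (1 - a) ^+ k.
Proof.
move=> k_gt0 /andP[a_ge0 a_le1].
by rewrite lerBrDl -lerBrDr ler_iXnr ?subr_ge0 ?gerBl.
Qed.

Lemma one_sub_expr_lt1 (a : R) k : a < 1 -> 1 - (1 - a) ^+ k < 1.
Proof. by move=> a_lt1; rewrite ltrBlDr ltrDl exprn_gt0 // subr_gt0. Qed.

End UnitIntervalWeights.

Lemma cvg_one_sub_expr (R : realType) (a : R) :
  `|1 - a| < 1 -> (fun k : nat => 1 - (1 - a) ^+ k) @ \oo --> (1 : R^o).
Proof.
move=> ratio_lt1.
by rewrite -[X in _ --> X]subr0; apply: cvgB; [exact: cvg_cst | exact: cvg_expr].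
Qed.

Theorem corollary2 (R : realType) (abar : R) (habar : 0 < abar < 1) :
  (forall (k : nat) (alpha : nat -> R),
     (1 <= k)%N ->
     (forall l : nat, (1 <= l <= k)%N -> 0 <= alpha l <= 1) ->
     \big[Num.max/0]_(1 <= l < k.+1) alpha l = abar ->
     \big[Num.max/0]_(1 <= j < k.+1) acc_weight alpha k j
       <= 1 - (1 - abar) ^+ k
     /\ 1 - (1 - abar) ^+ k < 1)
  /\ ((fun k : nat => 1 - (1 - abar) ^+ k) @ \oo --> (1 : R^o))
  /\ (forall k : nat, (1 <= k)%N -> 1 - (1 - abar) ^+ k < 1).
Proof.
have /andP[abar_gt0 abar_lt1] := habar.
have bound_lt1 k : 1 - (1 - abar) ^+ k < 1 by exact: one_sub_expr_lt1.
split; last split; last by move=> k _.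
- move=> k alpha k_ge1 alpha01 max_alpha; split=> //.
  have alpha1_le : alpha 1%N <= abar.
    by rewrite -max_alpha; apply: le_bigmax_seq; rewrite // mem_index_iota leqnn.
  have abar_le : abar <= 1 - (1 - abar) ^+ k.
    by rewrite le_one_sub_expr // (ltW abar_gt0) (ltW abar_lt1).
  have bound_ge0 := le_trans (ltW abar_gt0) abar_le.
  rewrite big_seq; apply: bigmax_le => // j; rewrite mem_index_iota ltnS => j_range.
  by rewrite (le_trans (acc_weight_le_head alpha j_range alpha01)) // (le_trans alpha1_le).
- by apply: cvg_one_sub_expr; rewrite gtr0_norm ?subr_gt0 // ltrBlDr ltrDl.
Qed.
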